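(* Let $n$ decision-making units (DMUs), indexed by $J=\{1,\dots,n\}$, each use $m$ inputs (indexed by $I$) and produce $s$ outputs (indexed by $R$), with $n\ge 2(m+s)$ and all observed data $x_{ij}>0$, $y_{rj}>0$. Fix $o\in J$. For a goal price $\tau_o>0$, the TVG (primal) program of the PT model is $$\Delta_o^{PT}=\min_{v_o,u_o}\ \sum_{i\in I}v_{io}x_{io}-\sum_{r\in R}u_{ro}y_{ro}$$ subject to $\sum_{i\in I}v_{io}x_{ij}-\sum_{r\in R}u_{ro}y_{rj}\ge 0$ for all $j\in J$, $x_{io}v_{io}\ge\tau_o$ for all $i\in I$, $y_{ro}u_{ro}\ge\tau_o$ for all $r\in R$, with $v_o,u_o$ free. Let $(v_o^\#,u_o^\#)$ be an optimal solution for $\tau_o=1$ (Step I), put $\bar t=1/\sum_{i}v^\#_{io}x_{io}$ and let $(v_o^\star,u_o^\star)=\bar t\,(v_o^\#,u_o^\#)$ be the Step II solution (goal price $\tau_o=\bar t$). Let $\alpha_o^\star=\sum_i v^\star_{io}x_{io}$, $\beta_o^\star=\sum_r u^\star_{ro}y_{ro}$, and define the PT efficiency $E_o^{PT\star}=\beta_o^\star/\alpha_o^\star$ and PT inefficiency $F_o^{PT\star}=1-E_o^{PT\star}=(\alpha_o^\star-\beta_o^\star)/\alpha_o^\star$. Then $0\le E_o^{PT\star}\le 1$ and $0\le F_o^{PT\star}\le 1$.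
   Context: The associated TAP (dual) program of the PT model is $\max\sum_{i}Q_{io}\tau_o+\sum_r P_{ro}\tau_o$ subject to $\sum_{j}x_{ij}\pi_{jo}+Q_{io}x_{io}=x_{io}$ ($i\in I$), $-\sum_j y_{rj}\pi_{jo}+P_{ro}y_{ro}=-y_{ro}$ ($r\in R$), $\pi_o,Q_o,P_o\ge 0$. Quantities such as $v_{io}x_{io}$ are called virtual prices (in a virtual currency \$); $\alpha_o^\star$ and $\beta_o^\star$ are the pure virtual input and pure virtual output of the evaluated DMU-$o$. *)

From mathcomp Require Import all_boot all_order all_algebra.
Set Implicit Arguments. Unset Strict Implicit. Unset Printing Implicit Defensive.
Import Order.TTheory GRing.Theory Num.Theory.
Local Open Scope ring_scope.

Section PT.
Variables (R : realFieldType) (m s n : nat).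
Variables (x : 'I_m -> 'I_n -> R) (y : 'I_s -> 'I_n -> R) (o : 'I_n).

Definition vinput (v : 'I_m -> R) (j : 'I_n) : R := \sum_(i < m) v i * x i j.
Definition voutput (u : 'I_s -> R) (j : 'I_n) : R := \sum_(r < s) u r * y r j.

Definition TVG_obj (v : 'I_m -> R) (u : 'I_s -> R) : R := vinput v o - voutput u o.

Definition TVG_feasible (tau : R) (v : 'I_m -> R) (u : 'I_s -> R) : Prop :=
  [/\ (forall j : 'I_n, 0 <= vinput v j - voutput u j),
      (forall i : 'I_m, tau <= x i o * v i) &
      (forall r : 'I_s, tau <= y r o * u r)].

Definition TVG_optimal (tau : R) (v : 'I_m -> R) (u : 'I_s -> R) : Prop :=
  TVG_feasible tau v u /\
  forall v' u', TVG_feasible tau v' u' -> TVG_obj v u <= TVG_obj v' u'.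

Definition tbar (vs : 'I_m -> R) : R := 1 / vinput vs o.
Definition vstar (vs : 'I_m -> R) : 'I_m -> R := fun i => tbar vs * vs i.
Definition ustar (vs : 'I_m -> R) (us : 'I_s -> R) : 'I_s -> R :=
  fun r => tbar vs * us r.

Definition alpha_star (vs : 'I_m -> R) : R := vinput (vstar vs) o.
Definition beta_star (vs : 'I_m -> R) (us : 'I_s -> R) : R :=
  voutput (ustar vs us) o.

Definition E_PT (vs : 'I_m -> R) (us : 'I_s -> R) : R :=
  beta_star vs us / alpha_star vs.
Definition F_PT (vs : 'I_m -> R) (us : 'I_s -> R) : R := 1 - E_PT vs us.

End PT.

(* The Step II rescaling multiplies alpha# and beta# by the same factor tbar,
   so E_PT equals beta#/alpha#.  Feasibility of the Step I solution at DMU o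
   itself gives beta# <= alpha#, and the goal-price constraints make every
   u#_r y_ro, hence beta#, nonnegative. *)
From mathcomp Require Import all_boot all_order all_algebra.
Set Implicit Arguments. Unset Strict Implicit. Unset Printing Implicit Defensive.
Import Order.TTheory GRing.Theory Num.Theory.
Local Open Scope ring_scope.

Lemma divr_ge0_le1 (F : numFieldType) (a b : F) :
  0 <= b <= a -> 0 <= b / a <= 1.
Proof.
case/andP=> b_ge0 le_ba; have a_ge0 := le_trans b_ge0 le_ba.
have [->|a_neq0] := eqVneq a 0; first by rewrite invr0 mulr0 lexx ler01.
have a_gt0 : 0 < a by rewrite lt_def a_neq0 a_ge0.
by rewrite divr_ge0 // ler_pdivrMr // mul1r.
Qed.

Lemma subr_ge0_le1 (F : numDomainType) (e : F) :
  0 <= e <= 1 -> 0 <= 1 - e <= 1.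
Proof. by case/andP=> e_ge0 e_le1; rewrite subr_ge0 e_le1 gerBl. Qed.

Section PTEfficiency.
Variables (R : realFieldType) (m s n : nat).
Variables (x : 'I_m -> 'I_n -> R) (y : 'I_s -> 'I_n -> R) (o : 'I_n).

Lemma vinputZ (c : R) (v : 'I_m -> R) (j : 'I_n) :
  vinput x (fun i => c * v i) j = c * vinput x v j.
Proof. by rewrite /vinput mulr_sumr; apply: eq_bigr => i _; rewrite mulrA. Qed.

Lemma voutputZ (c : R) (u : 'I_s -> R) (j : 'I_n) :
  voutput y (fun r => c * u r) j = c * voutput y u j.
Proof. by rewrite /voutput mulr_sumr; apply: eq_bigr => r _; rewrite mulrA. Qed.

Lemma E_PTE (vs : 'I_m -> R) (us : 'I_s -> R) :
  E_PT x y o vs us = voutput y us o / vinput x vs o.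
Proof.
rewrite /E_PT /alpha_star /beta_star /vstar /ustar vinputZ voutputZ.
rewrite /tbar div1r; set a := vinput x vs o.
have [->|a_neq0] := eqVneq a 0; first by rewrite invr0 !mul0r !mulr0.
by rewrite mulVf // divr1 mulrC.
Qed.

Lemma TVG_feasible_voutput_ge0 (tau : R) v u :
  0 <= tau -> TVG_feasible x y o tau v u -> 0 <= voutput y u o.
Proof.
move=> tau_ge0 [_ _ u_ge]; apply: sumr_ge0 => r _.
by rewrite mulrC (le_trans tau_ge0 (u_ge r)).
Qed.

Lemma TVG_feasible_voutput_le_vinput (tau : R) v u :
  TVG_feasible x y o tau v u -> voutput y u o <= vinput x v o.
Proof. by case=> dmu_ge0 _ _; rewrite -subr_ge0. Qed.

End PTEfficiency.

Theorem theorem1 (R : realFieldType) (m s n : nat)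
    (x : 'I_m -> 'I_n -> R) (y : 'I_s -> 'I_n -> R) (o : 'I_n)
    (hn : (2 * (m + s) <= n)%N)
    (hx : forall i j, 0 < x i j) (hy : forall r j, 0 < y r j)
    (vs : 'I_m -> R) (us : 'I_s -> R)
    (hopt : TVG_optimal x y o 1 vs us) :
  (0 <= E_PT x y o vs us <= 1) /\ (0 <= F_PT x y o vs us <= 1).
Proof.
case: hopt => feas _.
have E_in01 : 0 <= E_PT x y o vs us <= 1.
  rewrite E_PTE; apply: divr_ge0_le1.
  rewrite (TVG_feasible_voutput_ge0 ler01 feas).
  exact: TVG_feasible_voutput_le_vinput feas.
by split; last exact: subr_ge0_le1.
Qed.
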